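(* Let $\mathcal M=(M,\le,{}^\perp)$ be a complete orthomodular lattice, $L$ an involutive submonoid of $\mathbf{Lin}(\mathcal M)$ containing all Sasaki projections, and $\mathscr P(L)$ the corresponding involutive generalized dynamic algebra. Then $\widetilde{\mathscr P(L)}=(\{{\sim}W\mid W\in\mathscr P(L)\},\preceq,{\sim})$ is a complete orthomodular lattice closed under ${\sim}$, and the map $\delta\colon M\to\widetilde{\mathscr P(L)}$, $\delta(m)=\{\pi_m\}$, is an order-isomorphism with $\delta(m^\perp)={\sim}\delta(m)$ for all $m\in M$.
   Context: For an orthomodular lattice and $m\in M$, $\pi_m(x)=m\wedge(m^\perp\vee x)$ (Sasaki projection). A map $f\colon M\to M$ is linear if there is $g\colon M\to M$ (unique, written $f^*$) with $f(x)\le y^\perp\iff x\le g(y)^\perp$ for all $x,y$. $\mathbf{Lin}(\mathcal M)$ is the set of linear maps, an involutive monoid under composition, $f\mapsto f^*$, $\mathrm{id}_M$; each $\pi_m\in\mathbf{Lin}(\mathcal M)$. $\mathscr P(L)$ is the powerset of $L$ with union as join, $A\odot B=\{a\circ b\mid a\in A,b\in B\}$, $A^*=\{a^*\mid a\in A\}$, unit $\{\mathrm{id}_M\}$, ${\sim}A=\{\pi_{(\bigvee_{a\in A}a(1))^\perp}\}$. For a subset family $\mathcal W$ of the test set $\widetilde{\mathscr P(L)}=\{{\sim}W\}$, its join is $\bigvee\mathcal W={\sim}{\sim}(\bigcup\mathcal W)$, and $X\preceq Y$ iff $\bigvee\{X,Y\}=Y$. *)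

Set Implicit Arguments.

Section COML.
Variable A : Type.

Definition join2 (sup : (A -> Prop) -> A) (x y : A) : A :=
  sup (fun z => z = x \/ z = y).
Definition meet2 (perp : A -> A) (sup : (A -> Prop) -> A) (x y : A) : A :=
  perp (join2 sup (perp x) (perp y)).

Definition is_COML (C : A -> Prop) (le : A -> A -> Prop) (perp : A -> A)
    (sup : (A -> Prop) -> A) : Prop :=
  (forall x, C x -> C (perp x)) /\
  (forall S : A -> Prop, (forall x, S x -> C x) -> C (sup S)) /\
  (forall x, C x -> le x x) /\
  (forall x y, C x -> C y -> le x y -> le y x -> x = y) /\
  (forall x y z, C x -> C y -> C z -> le x y -> le y z -> le x z) /\
  (forall S : A -> Prop, (forall x, S x -> C x) ->
     (forall x, S x -> le x (sup S)) /\
     (forall u, C u -> (forall x, S x -> le x u) -> le (sup S) u)) /\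
  (forall x, C x -> perp (perp x) = x) /\
  (forall x y, C x -> C y -> le x y -> le (perp y) (perp x)) /\
  (forall x, C x -> join2 sup x (perp x) = sup C) /\
  (forall x y, C x -> C y -> le x y ->
     y = join2 sup x (meet2 perp sup y (perp x))).
End COML.

Section Dyn.
Variables (M : Type) (le : M -> M -> Prop) (perp : M -> M) (sup : (M -> Prop) -> M).

Definition top : M := sup (fun _ => True).

Definition sasaki (m : M) : M -> M :=
  fun x => meet2 perp sup m (join2 sup (perp m) x).

Definition is_adjoint (f g : M -> M) : Prop :=
  forall x y, le (f x) (perp y) <-> le x (perp (g y)).

Definition linear (f : M -> M) : Prop := exists g, is_adjoint f g.

Definition involutive_submonoid (L : (M -> M) -> Prop) : Prop :=
  (forall f, L f -> linear f) /\
  L (fun x => x) /\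
  (forall f g, L f -> L g -> L (fun x => f (g x))) /\
  (forall f g, L f -> is_adjoint f g -> L g).

Definition inPL (L : (M -> M) -> Prop) (W : (M -> M) -> Prop) : Prop :=
  forall f, W f -> L f.

Definition negP (W : (M -> M) -> Prop) : (M -> M) -> Prop :=
  fun f => f = sasaki (perp (sup (fun z => exists a, W a /\ z = a top))).

Definition testset (L : (M -> M) -> Prop) (X : (M -> M) -> Prop) : Prop :=
  exists W, inPL L W /\ X = negP W.

Definition tjoin (F : ((M -> M) -> Prop) -> Prop) : (M -> M) -> Prop :=
  negP (negP (fun f => exists W, F W /\ W f)).

Definition tle (X Y : (M -> M) -> Prop) : Prop :=
  tjoin (fun Z => Z = X \/ Z = Y) = Y.

Definition delta (m : M) : (M -> M) -> Prop := fun f => f = sasaki m.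
End Dyn.

From Stdlib Require Import FunctionalExtensionality PropExtensionality.

Set Implicit Arguments.

(* Every test ~W is a singleton {pi_m} with m = (\/_{a in W} a(1))^perp, and
   pi_m(1) = m; hence delta is a bijection from M onto the tests, it turns
   perp into ~ and joins in M into joins of tests.  The complete orthomodular
   structure of M is then carried over to the tests along delta. *)

Lemma pred_ext (T : Type) (P Q : T -> Prop) : (forall x, P x <-> Q x) -> P = Q.
Proof.
  intro HPQ; apply functional_extensionality; intro x.
  apply propositional_extensionality, HPQ.
Qed.

Section CompleteOrthomodularLattice.
Variables (A : Type) (le : A -> A -> Prop) (perp : A -> A) (sup : (A -> Prop) -> A).
Hypothesis HA : is_COML (fun _ => True) le perp sup.

Lemma COML_le_refl x : le x x.
Proof. destruct HA as (_ & _ & H & _); exact (H x I). Qed.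

Lemma COML_le_antisym {x y} : le x y -> le y x -> x = y.
Proof. destruct HA as (_ & _ & _ & H & _); exact (H x y I I). Qed.

Lemma COML_le_trans {x y z} : le x y -> le y z -> le x z.
Proof. destruct HA as (_ & _ & _ & _ & H & _); exact (H x y z I I I). Qed.

Lemma COML_sup_ub (S : A -> Prop) x : S x -> le x (sup S).
Proof. destruct HA as (_ & _ & _ & _ & _ & H & _); exact (proj1 (H S (fun _ _ => I)) x). Qed.

Lemma COML_sup_least (S : A -> Prop) u : (forall x, S x -> le x u) -> le (sup S) u.
Proof. destruct HA as (_ & _ & _ & _ & _ & H & _); exact (proj2 (H S (fun _ _ => I)) u I). Qed.

Lemma COML_perpK x : perp (perp x) = x.
Proof. destruct HA as (_ & _ & _ & _ & _ & _ & H & _); exact (H x I). Qed.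

Lemma COML_perp_le {x y} : le x y -> le (perp y) (perp x).
Proof. destruct HA as (_ & _ & _ & _ & _ & _ & _ & H & _); exact (H x y I I). Qed.

Lemma COML_join_perp x : join2 sup x (perp x) = sup (fun _ => True).
Proof. destruct HA as (_ & _ & _ & _ & _ & _ & _ & _ & H & _); exact (H x I). Qed.

Lemma COML_orthomodular {x y} :
  le x y -> y = join2 sup x (meet2 perp sup y (perp x)).
Proof. destruct HA as (_ & _ & _ & _ & _ & _ & _ & _ & _ & H); exact (H x y I I). Qed.

Lemma join2_ubl x y : le x (join2 sup x y).
Proof. apply COML_sup_ub; left; reflexivity. Qed.

Lemma join2_least {x y u} : le x u -> le y u -> le (join2 sup x y) u.
Proof. intros Hx Hy; apply COML_sup_least; intros z [-> | ->]; assumption. Qed.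

Lemma join2_idPr {x y} : le x y -> join2 sup x y = y.
Proof.
  intro Hxy; apply COML_le_antisym.
  - apply join2_least; [exact Hxy | apply COML_le_refl].
  - apply COML_sup_ub; right; reflexivity.
Qed.

Lemma join2_idPl {x y} : le y x -> join2 sup x y = x.
Proof.
  intro Hyx; apply COML_le_antisym.
  - apply join2_least; [apply COML_le_refl | exact Hyx].
  - apply join2_ubl.
Qed.

Lemma sup_pred1 x : sup (fun z => z = x) = x.
Proof.
  apply COML_le_antisym.
  - apply COML_sup_least; intros z ->; apply COML_le_refl.
  - apply COML_sup_ub; reflexivity.
Qed.

Lemma le_top x : le x (top sup).
Proof. apply COML_sup_ub; exact I. Qed.

End CompleteOrthomodularLattice.

Section Tests.
Variables (A : Type) (le : A -> A -> Prop) (perp : A -> A) (sup : (A -> Prop) -> A).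
Hypothesis HA : is_COML (fun _ => True) le perp sup.

Lemma sasaki_top m : sasaki perp sup m (top sup) = m.
Proof.
  unfold sasaki, meet2.
  rewrite (join2_idPr HA (le_top HA (perp m))).
  rewrite (join2_idPl HA); [apply (COML_perpK HA) |].
  apply (COML_perp_le HA), (le_top HA).
Qed.

Lemma delta_inj {m n} : delta perp sup m = delta perp sup n -> m = n.
Proof.
  intro Emn.
  assert (Hpi : delta perp sup n (sasaki perp sup m)) by (rewrite <- Emn; reflexivity).
  rewrite <- (sasaki_top m), Hpi; apply sasaki_top.
Qed.

Lemma negP_delta m : negP perp sup (delta perp sup m) = delta perp sup (perp m).
Proof.
  assert (Evals : (fun z => exists a, delta perp sup m a /\ z = a (top sup))
                  = (fun z => z = m)).
  { apply pred_ext; intro z; split.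
    - intros [a [-> ->]]; apply sasaki_top.
    - intros ->; exists (sasaki perp sup m); split; [reflexivity | symmetry; apply sasaki_top]. }
  unfold negP; rewrite Evals, (sup_pred1 HA); reflexivity.
Qed.

Lemma tjoin_delta (F : ((A -> A) -> Prop) -> Prop) :
  (forall X, F X -> exists k, X = delta perp sup k) ->
  tjoin perp sup F = delta perp sup (sup (fun m => F (delta perp sup m))).
Proof.
  intro HF; unfold tjoin.
  set (U := fun f => exists W, F W /\ W f).
  change (negP perp sup U)
    with (delta perp sup (perp (sup (fun z => exists a, U a /\ z = a (top sup))))).
  rewrite negP_delta, (COML_perpK HA).
  f_equal; f_equal; apply pred_ext; intro z; split.
  - intros [a [[W [HW Wa]] ->]].
    destruct (HF W HW) as [k ->]; rewrite Wa, sasaki_top; exact HW.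
  - intro Hz; exists (sasaki perp sup z); split.
    + exists (delta perp sup z); split; [exact Hz | reflexivity].
    + symmetry; apply sasaki_top.
Qed.

Lemma tle_delta m n : tle perp sup (delta perp sup m) (delta perp sup n) <-> le m n.
Proof.
  unfold tle; rewrite tjoin_delta by (intros X [-> | ->]; eexists; reflexivity).
  assert (Epair : (fun k => delta perp sup k = delta perp sup m
                            \/ delta perp sup k = delta perp sup n)
                  = (fun z => z = m \/ z = n)).
  { apply pred_ext; intro z; split.
    - intros [E | E]; [left | right]; exact (delta_inj E).
    - intros [-> | ->]; [left | right]; reflexivity. }
  rewrite Epair; fold (join2 sup m n); split.
  - intro Ejoin; apply delta_inj in Ejoin; rewrite <- Ejoin; apply (join2_ubl HA).
  - intro Hmn; rewrite (join2_idPr HA Hmn); reflexivity.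
Qed.

Lemma testset_delta {L : (A -> A) -> Prop} :
  (forall k, L (sasaki perp sup k)) -> forall m, testset perp sup L (delta perp sup m).
Proof.
  intros HL m; exists (delta perp sup (perp m)); split.
  - intros f ->; apply HL.
  - rewrite negP_delta, (COML_perpK HA); reflexivity.
Qed.

Lemma testset_delta_surj (L : (A -> A) -> Prop) X :
  testset perp sup L X -> exists m, delta perp sup m = X.
Proof. intros [W [_ ->]]; eexists; reflexivity. Qed.

End Tests.

Section Transfer.
Variables (A B : Type) (le : A -> A -> Prop) (perp : A -> A) (sup : (A -> Prop) -> A).
Variables (C : B -> Prop) (le' : B -> B -> Prop) (perp' : B -> B) (sup' : (B -> Prop) -> B).
Variable d : A -> B.
Hypotheses (HA : is_COML (fun _ => True) le perp sup)
  (d_in : forall m, C (d m))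
  (d_surj : forall x, C x -> exists m, d m = x)
  (d_inj : forall m n, d m = d n -> m = n)
  (d_le : forall m n, le' (d m) (d n) <-> le m n)
  (d_perp : forall m, perp' (d m) = d (perp m))
  (d_sup : forall S, (forall x, S x -> C x) -> sup' S = d (sup (fun m => S (d m)))).

Lemma join2_transfer m n : join2 sup' (d m) (d n) = d (join2 sup m n).
Proof.
  unfold join2; rewrite d_sup by (intros x [-> | ->]; apply d_in).
  f_equal; f_equal; apply pred_ext; intro z; split.
  - intros [E | E]; [left | right]; exact (d_inj E).
  - intros [-> | ->]; [left | right]; reflexivity.
Qed.

Lemma top_transfer : sup' C = d (sup (fun _ => True)).
Proof.
  rewrite d_sup by auto.
  f_equal; f_equal; apply pred_ext; intro z; split; auto.
Qed.

Lemma is_COML_transfer : is_COML C le' perp' sup'.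
Proof.
  split; [| split; [| split; [| split; [| split; [| split; [| split; [| split; [| split]]]]]]]].
  - intros x Cx; destruct (d_surj Cx) as [m <-]; rewrite d_perp; apply d_in.
  - intros S HS; rewrite d_sup by exact HS; apply d_in.
  - intros x Cx; destruct (d_surj Cx) as [m <-]; apply d_le, (COML_le_refl HA).
  - intros x y Cx Cy Hxy Hyx.
    destruct (d_surj Cx) as [m <-]; destruct (d_surj Cy) as [n <-].
    f_equal; apply (COML_le_antisym HA); apply d_le; assumption.
  - intros x y z Cx Cy Cz Hxy Hyz.
    destruct (d_surj Cx) as [m <-]; destruct (d_surj Cy) as [n <-];
      destruct (d_surj Cz) as [k <-].
    apply d_le in Hxy; apply d_le in Hyz; apply d_le; exact (COML_le_trans HA Hxy Hyz).
  - intros S HS; rewrite d_sup by exact HS; split.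
    + intros x Sx; destruct (d_surj (HS x Sx)) as [m <-].
      apply d_le, (COML_sup_ub HA); exact Sx.
    + intros u Cu Hu; destruct (d_surj Cu) as [k <-].
      apply d_le, (COML_sup_least HA); intros m Sm; apply d_le, Hu, Sm.
  - intros x Cx; destruct (d_surj Cx) as [m <-].
    rewrite !d_perp, (COML_perpK HA); reflexivity.
  - intros x y Cx Cy Hxy.
    destruct (d_surj Cx) as [m <-]; destruct (d_surj Cy) as [n <-].
    rewrite !d_perp; apply d_le, (COML_perp_le HA), d_le, Hxy.
  - intros x Cx; destruct (d_surj Cx) as [m <-].
    rewrite d_perp, join2_transfer, (COML_join_perp HA), top_transfer; reflexivity.
  - intros x y Cx Cy Hxy.
    destruct (d_surj Cx) as [m <-]; destruct (d_surj Cy) as [n <-].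
    unfold meet2; rewrite !d_perp, join2_transfer, d_perp, join2_transfer.
    exact (f_equal d (COML_orthomodular HA (proj1 (d_le m n) Hxy))).
Qed.

End Transfer.

Theorem proposition3p10 (M : Type) (le : M -> M -> Prop) (perp : M -> M)
    (sup : (M -> Prop) -> M) (L : (M -> M) -> Prop) :
  is_COML (fun _ : M => True) le perp sup ->
  involutive_submonoid le perp L ->
  (forall m : M, L (sasaki perp sup m)) ->
  (* the test set is a complete orthomodular lattice, closed under ~ *)
  is_COML (testset perp sup L) (tle perp sup) (negP perp sup) (tjoin perp sup) /\
  (* delta is an order-isomorphism M -> test set, with delta(m^perp) = ~delta(m) *)
  (forall m : M, testset perp sup L (delta perp sup m)) /\
  (forall m n : M, delta perp sup m = delta perp sup n -> m = n) /\
  (forall X, testset perp sup L X -> exists m : M, delta perp sup m = X) /\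
  (forall m n : M, le m n <-> tle perp sup (delta perp sup m) (delta perp sup n)) /\
  (forall m : M, delta perp sup (perp m) = negP perp sup (delta perp sup m)).
Proof.
  intros HM _ HL.
  split; [| split; [| split; [| split; [| split]]]].
  - apply (is_COML_transfer _ _ _ _ (delta perp sup) HM).
    + exact (testset_delta HM HL).
    + intros X HX; exact (testset_delta_surj HX).
    + intros m n; exact (delta_inj HM).
    + exact (tle_delta HM).
    + exact (negP_delta HM).
    + intros S HS; apply (tjoin_delta HM); intros X HX.
      destruct (testset_delta_surj (HS X HX)) as [k <-]; eauto.
  - exact (testset_delta HM HL).
  - intros m n; exact (delta_inj HM).
  - intros X HX; exact (testset_delta_surj HX).
  - intros m n; symmetry; exact (tle_delta HM m n).
  - intro m; symmetry; exact (negP_delta HM m).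
Qed.
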